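(* The second-order ordinary differential equation $$(\chi+\psi)^{2}\frac{d^{2}\psi}{d\chi^{2}}+(\chi+\psi)\left(\frac{d\psi}{d\chi}-2(2+\chi)\right)\frac{d\psi}{d\chi}+(6+4\chi+3\psi)\psi=0$$ for $\psi=\psi(\chi)$ admits no (nontrivial) Lie point symmetries.
   Context: This equation is the reduction of the Chazy equation $y'''-2yy''+3(y')^2=0$ by the invariants $\chi=xy$, $\psi=x^2y'$ of the scaling symmetry $x\partial_x-y\partial_y$. *)

From Stdlib Require Import Reals.
Open Scope R_scope.

Definition open2 (U : R -> R -> Prop) : Prop :=
  forall x y, U x y -> exists r, 0 < r /\
    forall x' y', Rabs (x' - x) < r -> Rabs (y' - y) < r -> U x' y'.

Definition cont2_on (U : R -> R -> Prop) (f : R -> R -> R) : Prop :=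
  forall x y, U x y -> forall eps, 0 < eps -> exists delta, 0 < delta /\
    forall x' y', Rabs (x' - x) < delta -> Rabs (y' - y) < delta ->
      Rabs (f x' y' - f x y) < eps.

Definition partial_x_on (U : R -> R -> Prop) (f g : R -> R -> R) : Prop :=
  forall x y, U x y -> derivable_pt_lim (fun t => f t y) x (g x y).
Definition partial_y_on (U : R -> R -> Prop) (f g : R -> R -> R) : Prop :=
  forall x y, U x y -> derivable_pt_lim (fun t => f x t) y (g x y).

(** D is the family of all partial derivatives of f on U:
    D i j = d^i/dx^i d^j/dy^j f, all existing and continuous on U.
    Hence f is C^infinity (smooth) on U. *)
Definition smooth_family (U : R -> R -> Prop) (f : R -> R -> R)
    (D : nat -> nat -> R -> R -> R) : Prop :=
  (forall x y, U x y -> D O O x y = f x y) /\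
  (forall i j, partial_x_on U (D i j) (D (S i) j) /\
               partial_y_on U (D i j) (D i (S j)) /\
               cont2_on U (D i j)).

(** The ODE  F(chi, psi, psi', psi'') = 0  with x = chi, y = psi, p = psi', q = psi'':
    (x+y)^2 q + (x+y)(p - 2(2+x)) p + (6+4x+3y) y = 0. *)
Definition F (x y p q : R) : R :=
  (x + y) ^ 2 * q + (x + y) * (p - 2 * (2 + x)) * p + (6 + 4 * x + 3 * y) * y.

Definition F_x (x y p q : R) : R :=
  2 * (x + y) * q + (p - 2 * (2 + x)) * p - 2 * (x + y) * p + 4 * y.
Definition F_y (x y p q : R) : R :=
  2 * (x + y) * q + (p - 2 * (2 + x)) * p + (6 + 4 * x + 6 * y).
Definition F_p (x y p q : R) : R :=
  (x + y) * (2 * p - 2 * (2 + x)).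
Definition F_q (x y p q : R) : R :=
  (x + y) ^ 2.

(** Second prolongation of X = xi d/dx + eta d/dy applied to F, with the
    partial derivatives of xi, eta given by the families Dxi, Deta. *)
Definition eta1 (Dxi Deta : nat -> nat -> R -> R -> R) (x y p : R) : R :=
  Deta 1%nat 0%nat x y + (Deta 0%nat 1%nat x y - Dxi 1%nat 0%nat x y) * p
  - Dxi 0%nat 1%nat x y * p ^ 2.

Definition eta2 (Dxi Deta : nat -> nat -> R -> R -> R) (x y p q : R) : R :=
  Deta 2%nat 0%nat x y
  + (2 * Deta 1%nat 1%nat x y - Dxi 2%nat 0%nat x y) * p
  + (Deta 0%nat 2%nat x y - 2 * Dxi 1%nat 1%nat x y) * p ^ 2
  - Dxi 0%nat 2%nat x y * p ^ 3
  + (Deta 0%nat 1%nat x y - 2 * Dxi 1%nat 0%nat x y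
     - 3 * Dxi 0%nat 1%nat x y * p) * q.

Definition pr2X_F (Dxi Deta : nat -> nat -> R -> R -> R) (x y p q : R) : R :=
  Dxi 0%nat 0%nat x y * F_x x y p q + Deta 0%nat 0%nat x y * F_y x y p q
  + eta1 Dxi Deta x y p * F_p x y p q + eta2 Dxi Deta x y p q * F_q x y p q.

(** X = xi d/dx + eta d/dy (xi, eta smooth on the open set U) is a Lie point
    symmetry of the ODE on U: infinitesimal invariance criterion
    pr^(2) X F = 0 whenever F = 0. *)
Definition lie_point_symmetry (U : R -> R -> Prop) (xi eta : R -> R -> R) : Prop :=
  exists Dxi Deta,
    smooth_family U xi Dxi /\ smooth_family U eta Deta /\
    forall x y p q, U x y -> F x y p q = 0 -> pr2X_F Dxi Deta x y p q = 0.

From Stdlib Require Import Reals Lra Lia List.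
From Coquelicot Require Import Coquelicot.
Import ListNotations.
Open Scope R_scope.

(* Write s = x + y.  The invariance condition, restricted to the ODE q = ode_q x y p and
   cleared of denominators, is a cubic in p whose four coefficients are the determining
   equations.  The p^3 and p^2 equations integrate to
     xi = a + c s^2,   eta = - a + alpha s + b / s + (21 + 8 x) c s^2 / 3 + c' s^3 / 2
   with a, c, alpha, b functions of x alone.  Substituted into the p^1 and p^0 equations
   this gives polynomials in s with coefficients depending on x only, so every coefficient
   vanishes: c'' = c' = c = 0, (3 + x) b = x (6 + x) b = 0, and two equations forcing
   a = 0 and alpha = a' = 0.
   As U is an arbitrary open set, "a function of x alone" is never integrated: a, c, alpha,
   b and their x-derivatives are explicit combinations of jets of xi and eta whose
   y-derivatives vanish on U. *)

Lemma is_derive_locally_zero (f : R -> R) x l r : 0 < r ->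
  (forall t, Rabs (t - x) < r -> f t = 0) -> is_derive f x l -> l = 0.
Proof.
  intros Hr Hf Hd.
  assert (Hd0 : is_derive (fun _ => 0) x l).
  { apply (is_derive_ext_loc f); [exists (mkposreal r Hr); exact Hf | exact Hd]. }
  assert (H0 : is_derive (fun _ : R => 0) x 0) by (auto_derive; auto).
  rewrite <- (is_derive_unique _ _ _ Hd0). exact (is_derive_unique _ _ _ H0).
Qed.

Lemma is_derive_eq_value (f : R -> R) (x l l' : R) :
  is_derive f x l -> l = l' -> is_derive f x l'.
Proof. intros H <-; exact H. Qed.

Lemma is_derive_mult_R (f g : R -> R) x df dg :
  is_derive f x df -> is_derive g x dg -> is_derive (fun t => f t * g t) x (df * g x + f x * dg).
Proof.
  intros Hf Hg. apply (is_derive_mult f g x df dg Hf Hg). intros; apply Rmult_comm.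
Qed.

Section OpenSet.

Variable U : R -> R -> Prop.
Hypothesis U_open : open2 U.

Lemma partial_x_of_vanishing (f g : R -> R -> R) :
  (forall x y, U x y -> f x y = 0) ->
  (forall x y, U x y -> is_derive (fun t => f t y) x (g x y)) ->
  forall x y, U x y -> g x y = 0.
Proof.
  intros Hf Hg x y Hxy. destruct (U_open x y Hxy) as [r [Hr HU]].
  apply (is_derive_locally_zero (fun t => f t y) x _ r Hr); [|exact (Hg x y Hxy)].
  intros t Ht. apply Hf, HU; [exact Ht | rewrite Rminus_eq_0, Rabs_R0; exact Hr].
Qed.

Lemma partial_y_of_vanishing (f g : R -> R -> R) :
  (forall x y, U x y -> f x y = 0) ->
  (forall x y, U x y -> is_derive (fun t => f x t) y (g x y)) ->
  forall x y, U x y -> g x y = 0.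
Proof.
  intros Hf Hg x y Hxy. destruct (U_open x y Hxy) as [r [Hr HU]].
  apply (is_derive_locally_zero (fun t => f x t) y _ r Hr); [|exact (Hg x y Hxy)].
  intros t Ht. apply Hf, HU; [rewrite Rminus_eq_0, Rabs_R0; exact Hr | exact Ht].
Qed.

Lemma is_derive_s_polynomial (f : nat -> R -> R -> R) n x y :
  (forall j, is_derive (fun t => f j x t) y 0) ->
  is_derive (fun t => sum_f_R0 (fun j => f j x t * (x + t) ^ j) (S n)) y
    (sum_f_R0 (fun j => INR (S j) * f (S j) x y * (x + y) ^ j) n).
Proof.
  intros Hf.
  assert (Hterm : forall j, is_derive (fun t => f j x t * (x + t) ^ j) y
                                      (INR j * f j x y * (x + y) ^ pred j)).
  { intro j.
    assert (Hp : is_derive (fun t => (x + t) ^ j) y (INR j * (x + y) ^ pred j)).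
    { auto_derive; [exact I | ring]. }
    refine (is_derive_eq_value _ _ _ _ (is_derive_mult_R _ _ _ _ _ (Hf j) Hp) _). ring. }
  induction n as [|n IH].
  - simpl. eapply is_derive_eq_value.
    + apply (is_derive_plus (fun t => f 0%nat x t * 1) (fun t => f 1%nat x t * ((x + t) * 1))).
      * apply (Hterm 0%nat).
      * apply (Hterm 1%nat).
    + unfold plus; simpl. ring.
  - eapply is_derive_eq_value.
    + apply (is_derive_plus _ (fun t => f (S (S n)) x t * (x + t) ^ S (S n)) _ _ _ IH (Hterm _)).
    + unfold plus; simpl. ring.
Qed.

Lemma s_polynomial_coefficients_vanish (f : nat -> R -> R -> R) (n : nat) :
  (forall j x y, U x y -> is_derive (fun t => f j x t) y 0) ->
  (forall x y, U x y -> sum_f_R0 (fun j => f j x y * (x + y) ^ j) n = 0) ->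
  forall j x y, (j <= n)%nat -> U x y -> f j x y = 0.
Proof.
  revert f. induction n as [|n IH]; intros f Hf Hsum j x y Hj Hxy.
  - replace j with 0%nat by lia. rewrite <- (Hsum x y Hxy). simpl. ring.
  - assert (Hhigh : forall j x y, (j <= n)%nat -> U x y -> f (S j) x y = 0).
    { intros j' x' y' Hj' Hxy'.
      assert (H := IH (fun j x y => INR (S j) * f (S j) x y)).
      assert (Hne : INR (S j') <> 0) by (apply not_0_INR; discriminate).
      apply (Rmult_eq_reg_l (INR (S j'))); [rewrite Rmult_0_r; apply H | exact Hne]; auto.
      - intros k x0 y0 H0. eapply is_derive_eq_value.
        + apply is_derive_scal, Hf, H0.
        + ring.
      - apply (partial_y_of_vanishing _ _ Hsum). intros x0 y0 H0.
        apply is_derive_s_polynomial. intro k. apply Hf, H0. }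
    assert (Hlow : forall m, (m <= S n)%nat ->
                   sum_f_R0 (fun j => f j x y * (x + y) ^ j) m = f 0%nat x y).
    { induction m as [|m IHm]; intro Hm; simpl.
      - ring.
      - rewrite IHm by lia. rewrite (Hhigh m x y) by (lia || exact Hxy). ring. }
    destruct j as [|j].
    + rewrite <- (Hlow (S n)), Hsum by (lia || exact Hxy). reflexivity.
    + apply Hhigh; [lia | exact Hxy].
Qed.

End OpenSet.

Record monomial := Mono { mono_coef : R; mono_x : nat; mono_s : nat; mono_inv_s : nat }.

Definition monomial_val (m : monomial) (x y : R) : R :=
  let '(Mono c i j k) := m in c * x ^ i * (x + y) ^ j / (x + y) ^ k.

Definition monomial_ds (m : monomial) : list monomial :=
  let '(Mono c i j k) := m in [Mono (c * INR j) i (pred j) k; Mono (- (c * INR k)) i j (S k)].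

Definition monomial_dx (m : monomial) : list monomial :=
  let '(Mono c i j k) := m in Mono (c * INR i) (pred i) j k :: monomial_ds m.

Definition monomials_val (l : list monomial) (x y : R) : R :=
  fold_right (fun m acc => monomial_val m x y + acc) 0 l.

Lemma is_derive_monomial_x m x y : x + y <> 0 ->
  is_derive (fun t => monomial_val m t y) x (monomials_val (monomial_dx m) x y).
Proof.
  destruct m as [c i j k]; intros Hs. simpl. auto_derive.
  - apply pow_nonzero; exact Hs.
  - destruct i, j, k; simpl; field; repeat split; auto; apply pow_nonzero; exact Hs.
Qed.

Lemma is_derive_monomial_y m x y : x + y <> 0 ->
  is_derive (fun t => monomial_val m x t) y (monomials_val (monomial_ds m) x y).
Proof.
  destruct m as [c i j k]; intros Hs. simpl. auto_derive.
  - apply pow_nonzero; exact Hs.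
  - destruct j, k; simpl; field; repeat split; auto; apply pow_nonzero; exact Hs.
Qed.

Section Calculus.

Variable A : Type.
Variable val : A -> R -> R -> R.
Variables ax ay : A -> A.

Fixpoint expr_val (e : list (monomial * A)) (x y : R) : R :=
  match e with
  | [] => 0
  | (m, a) :: e' => monomial_val m x y * val a x y + expr_val e' x y
  end.

Definition expr_dx (e : list (monomial * A)) : list (monomial * A) :=
  flat_map (fun '(m, a) => (m, ax a) :: map (fun m' => (m', a)) (monomial_dx m)) e.

Definition expr_dy (e : list (monomial * A)) : list (monomial * A) :=
  flat_map (fun '(m, a) => (m, ay a) :: map (fun m' => (m', a)) (monomial_ds m)) e.

Lemma expr_val_app e1 e2 x y : expr_val (e1 ++ e2) x y = expr_val e1 x y + expr_val e2 x y.
Proof. induction e1 as [|[m a] e1 IH]; simpl; [ring | rewrite IH; ring]. Qed.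

Lemma expr_val_map l a x y :
  expr_val (map (fun m => (m, a)) l) x y = monomials_val l x y * val a x y.
Proof. induction l as [|m l IH]; simpl; [ring | rewrite IH; ring]. Qed.

Hypothesis axy_comm : forall a, ax (ay a) = ay (ax a).

Lemma expr_val_dy_dx e x y :
  expr_val (expr_dy (expr_dx e)) x y = expr_val (expr_dx (expr_dy e)) x y.
Proof.
  induction e as [|[[c i j k] a] e IH]; [reflexivity|].
  change (expr_dx ((Mono c i j k, a) :: e)) with
    (((Mono c i j k, ax a) :: map (fun m => (m, a)) (monomial_dx (Mono c i j k))) ++ expr_dx e).
  change (expr_dy ((Mono c i j k, a) :: e)) with
    (((Mono c i j k, ay a) :: map (fun m => (m, a)) (monomial_ds (Mono c i j k))) ++ expr_dy e).
  unfold expr_dy at 1, expr_dx at 2. rewrite !flat_map_app.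
  rewrite !expr_val_app.
  change (expr_val (flat_map _ (expr_dx e)) x y) with (expr_val (expr_dy (expr_dx e)) x y).
  change (expr_val (flat_map _ (expr_dy e)) x y) with (expr_val (expr_dx (expr_dy e)) x y).
  rewrite IH.
  cbn -[INR pow Rdiv]. rewrite axy_comm. unfold Rdiv. ring.
Qed.

Variable U : R -> R -> Prop.
Hypothesis U_open : open2 U.
Hypothesis s_neq : forall x y, U x y -> x + y <> 0.
Hypothesis val_dx : forall a x y, U x y -> is_derive (fun t => val a t y) x (val (ax a) x y).
Hypothesis val_dy : forall a x y, U x y -> is_derive (fun t => val a x t) y (val (ay a) x y).

Lemma is_derive_expr_val_x e x y : U x y ->
  is_derive (fun t => expr_val e t y) x (expr_val (expr_dx e) x y).
Proof.
  intros Hxy. induction e as [|[m a] e IH]; simpl.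
  - auto_derive; auto.
  - rewrite expr_val_app. simpl. rewrite expr_val_map.
    pose proof (is_derive_monomial_x m x y (s_neq x y Hxy)) as Hm.
    refine (is_derive_eq_value _ _ _ _
      (is_derive_plus _ _ _ _ _ (is_derive_mult_R _ _ _ _ _ Hm (val_dx a x y Hxy)) IH) _).
    unfold plus; simpl. ring.
Qed.

Lemma is_derive_expr_val_y e x y : U x y ->
  is_derive (fun t => expr_val e x t) y (expr_val (expr_dy e) x y).
Proof.
  intros Hxy. induction e as [|[m a] e IH]; simpl.
  - auto_derive; auto.
  - rewrite expr_val_app. simpl. rewrite expr_val_map.
    pose proof (is_derive_monomial_y m x y (s_neq x y Hxy)) as Hm.
    refine (is_derive_eq_value _ _ _ _
      (is_derive_plus _ _ _ _ _ (is_derive_mult_R _ _ _ _ _ Hm (val_dy a x y Hxy)) IH) _).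
    unfold plus; simpl. ring.
Qed.

Definition vanishes (e : list (monomial * A)) : Prop :=
  forall x y, U x y -> expr_val e x y = 0.

Lemma vanishes_dx e : vanishes e -> vanishes (expr_dx e).
Proof.
  intros He x y Hxy.
  apply (partial_x_of_vanishing U U_open (expr_val e) (expr_val (expr_dx e)) He); [|exact Hxy].
  intros x' y'; apply is_derive_expr_val_x.
Qed.

Lemma vanishes_dy e : vanishes e -> vanishes (expr_dy e).
Proof.
  intros He x y Hxy.
  apply (partial_y_of_vanishing U U_open (expr_val e) (expr_val (expr_dy e)) He); [|exact Hxy].
  intros x' y'; apply is_derive_expr_val_y.
Qed.

Lemma vanishes_dy_iter_dx e k :
  vanishes (expr_dy e) -> vanishes (expr_dy (Nat.iter k expr_dx e)).
Proof.
  intros He. induction k as [|k IH]; [exact He|].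
  intros x y Hxy. simpl. rewrite expr_val_dy_dx. exact (vanishes_dx _ IH x y Hxy).
Qed.

End Calculus.

Arguments expr_val {A} val e x y.
Arguments expr_dx {A} ax e.
Arguments expr_dy {A} ay e.
Arguments vanishes {A} val U e.
Arguments is_derive_expr_val_x {A val ax U} s_neq val_dx e x y.
Arguments is_derive_expr_val_y {A val ay U} s_neq val_dy e x y.
Arguments vanishes_dx {A val ax U} U_open s_neq val_dx e.
Arguments vanishes_dy {A val ay U} U_open s_neq val_dy e.
Arguments vanishes_dy_iter_dx {A val ax ay} axy_comm {U} U_open s_neq val_dx e k.

Inductive jet := dxi (i j : nat) | deta (i j : nat).

Definition jet_dx (a : jet) : jet :=
  match a with dxi i j => dxi (S i) j | deta i j => deta (S i) j end.
Definition jet_dy (a : jet) : jet :=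
  match a with dxi i j => dxi i (S j) | deta i j => deta i (S j) end.

Lemma jet_dx_dy a : jet_dx (jet_dy a) = jet_dy (jet_dx a).
Proof. destruct a; reflexivity. Qed.

(* The coefficient of p^k of a cubic polynomial f, by interpolation at p = -1, 0, 1, 2. *)
Definition cubic_coef (f : R -> R) (k : nat) : R :=
  match k with
  | 0%nat => f 0
  | 1%nat => (f 1 - f (-1)) / 2 - (f 2 - 3 * f 1 + 3 * f 0 - f (-1)) / 6
  | 2%nat => (f 1 + f (-1)) / 2 - f 0
  | _ => (f 2 - 3 * f 1 + 3 * f 0 - f (-1)) / 6
  end.

Definition ode_q (x y p : R) : R :=
  - ((x + y) * (p - 2 * (2 + x)) * p + (6 + 4 * x + 3 * y) * y) / (x + y) ^ 2.

Lemma F_ode_q x y p : x + y <> 0 -> F x y p (ode_q x y p) = 0.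
Proof. intros Hs. unfold F, ode_q. field. exact Hs. Qed.

Inductive quantity := qa | qc | qalpha | qb.

Definition jet_term (c : R) (i j k : nat) (a : jet) : monomial * jet := (Mono c i j k, a).

(* The quantities a, c, alpha, b of the integrated p^3 and p^2 equations, written through
   the jets of xi and eta by inverting the representation of xi, eta, eta_y in terms of them
   (see xi_eta_representation). *)
Definition base (q : quantity) : list (monomial * jet) :=
  match q with
  | qa => [jet_term 1 0 0 0 (dxi 0 0); jet_term (-1/2) 0 2 0 (dxi 0 2)]
  | qc => [jet_term (1/2) 0 0 0 (dxi 0 2)]
  | qalpha => [jet_term (1/2) 0 0 1 (deta 0 0); jet_term (1/2) 0 0 0 (deta 0 1);
               jet_term (1/2) 0 0 1 (dxi 0 0); jet_term (-11/2) 0 1 0 (dxi 0 2);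
               jet_term (-2) 1 1 0 (dxi 0 2); jet_term (-1/2) 0 2 0 (dxi 1 2)]
  | qb => [jet_term (1/2) 0 1 0 (deta 0 0); jet_term (-1/2) 0 2 0 (deta 0 1);
           jet_term (1/2) 0 1 0 (dxi 0 0); jet_term (3/2) 0 3 0 (dxi 0 2);
           jet_term (2/3) 1 3 0 (dxi 0 2); jet_term (1/4) 0 4 0 (dxi 1 2)]
  end.

Section Symmetry.

Variable U : R -> R -> Prop.
Variables xi eta : R -> R -> R.
Variables Dxi Deta : nat -> nat -> R -> R -> R.
Hypothesis U_open : open2 U.
Hypothesis s_neq : forall x y, U x y -> x + y <> 0.
Hypothesis xi_smooth : smooth_family U xi Dxi.
Hypothesis eta_smooth : smooth_family U eta Deta.
Hypothesis invariance : forall x y p q, U x y -> F x y p q = 0 -> pr2X_F Dxi Deta x y p q = 0.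

Definition jet_val (a : jet) : R -> R -> R :=
  match a with dxi i j => Dxi i j | deta i j => Deta i j end.

Lemma is_derive_jet_x a x y : U x y ->
  is_derive (fun t => jet_val a t y) x (jet_val (jet_dx a) x y).
Proof.
  intros Hxy. apply is_derive_Reals. destruct a as [i j|i j]; simpl.
  - apply (proj2 xi_smooth i j); exact Hxy.
  - apply (proj2 eta_smooth i j); exact Hxy.
Qed.

Lemma is_derive_jet_y a x y : U x y ->
  is_derive (fun t => jet_val a x t) y (jet_val (jet_dy a) x y).
Proof.
  intros Hxy. apply is_derive_Reals. destruct a as [i j|i j]; simpl.
  - apply (proj2 xi_smooth i j); exact Hxy.
  - apply (proj2 eta_smooth i j); exact Hxy.
Qed.

(* pr2X_F on the solutions of the ODE, times x + y: a polynomial in x + y and cubic in p. *)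
Definition prolonged_F (x y p : R) : R := (x + y) * pr2X_F Dxi Deta x y p (ode_q x y p).

Ltac unfold_prolonged_F :=
  unfold cubic_coef, prolonged_F, pr2X_F, eta1, eta2, F_x, F_y, F_p, F_q, ode_q.

Lemma p_coef_vanishes k x y : U x y -> cubic_coef (prolonged_F x y) k = 0.
Proof.
  intros Hxy.
  assert (H : forall p, prolonged_F x y p = 0).
  { intro p. unfold prolonged_F.
    rewrite invariance; [ring | exact Hxy | apply F_ode_q, s_neq, Hxy]. }
  destruct k as [|[|[|k]]]; simpl; rewrite !H; field.
Qed.

Lemma xi_y_eq x y : U x y -> Dxi 0 1 x y = (x + y) * Dxi 0 2 x y.
Proof.
  intros Hxy. pose proof (s_neq x y Hxy) as Hs.
  assert (E : cubic_coef (prolonged_F x y) 3 = (x + y) ^ 2 * (Dxi 0 1 x y - (x + y) * Dxi 0 2 x y)).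
  { unfold_prolonged_F. field. exact Hs. }
  rewrite p_coef_vanishes in E by exact Hxy.
  symmetry in E. apply Rmult_integral in E as [E|E].
  - exfalso. exact (pow_nonzero _ 2 Hs E).
  - lra.
Qed.

Lemma eta_yy_eq x y : U x y -> Deta 0 2 x y =
  (Dxi 0 0 x y + (8 + 4 * x) * (x + y) * Dxi 0 1 x y + 2 * (x + y) ^ 2 * Dxi 1 1 x y
   + Deta 0 0 x y - (x + y) * Deta 0 1 x y) / (x + y) ^ 2.
Proof.
  intros Hxy. pose proof (s_neq x y Hxy) as Hs.
  assert (E : cubic_coef (prolonged_F x y) 2 = (x + y) *
    ((x + y) ^ 2 * Deta 0 2 x y - (Dxi 0 0 x y + (8 + 4 * x) * (x + y) * Dxi 0 1 x y
     + 2 * (x + y) ^ 2 * Dxi 1 1 x y + Deta 0 0 x y - (x + y) * Deta 0 1 x y))).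
  { unfold_prolonged_F. field. exact Hs. }
  rewrite p_coef_vanishes in E by exact Hxy.
  symmetry in E. apply Rmult_integral in E as [E|E]; [contradiction|].
  apply Rminus_diag_uniq in E. rewrite <- E. field. exact Hs.
Qed.

Notation jvanishes := (vanishes jet_val U).

Definition xi_y_expr : list (monomial * jet) :=
  [jet_term 1 0 0 0 (dxi 0 1); jet_term (-1) 0 1 0 (dxi 0 2)].

Lemma xi_y_expr_vanishes : jvanishes xi_y_expr.
Proof. intros x y Hxy. simpl. rewrite xi_y_eq by exact Hxy. field. Qed.

Lemma xi_yyy_eq0 x y : U x y -> Dxi 0 3 x y = 0.
Proof.
  intros Hxy. pose proof (s_neq x y Hxy) as Hs.
  pose proof (vanishes_dy U_open s_neq is_derive_jet_y _ xi_y_expr_vanishes x y Hxy) as E.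
  simpl in E.
  apply (Rmult_eq_reg_l (- (x + y))); [|intro; apply Hs; lra].
  rewrite Rmult_0_r, <- E. field. exact Hs.
Qed.

Lemma xi_xy_eq x y : U x y -> Dxi 1 1 x y = Dxi 0 2 x y + (x + y) * Dxi 1 2 x y.
Proof.
  intros Hxy. pose proof (s_neq x y Hxy) as Hs.
  pose proof (vanishes_dx U_open s_neq is_derive_jet_x _ xi_y_expr_vanishes x y Hxy) as E.
  simpl in E. apply Rminus_diag_uniq. rewrite <- E. field. exact Hs.
Qed.

Lemma xi_xyyy_eq0 x y : U x y -> Dxi 1 3 x y = 0.
Proof.
  apply (partial_x_of_vanishing U U_open (Dxi 0 3) (Dxi 1 3) xi_yyy_eq0).
  intros x' y' H. apply is_derive_Reals, (proj2 xi_smooth 0%nat 3%nat), H.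
Qed.

Lemma base_dy_vanishes q : jvanishes (expr_dy jet_dy (base q)).
Proof.
  intros x y Hxy. pose proof (s_neq x y Hxy) as Hs.
  destruct q; simpl; rewrite ?(eta_yy_eq x y Hxy), ?(xi_xy_eq x y Hxy), ?(xi_y_eq x y Hxy),
    ?(xi_yyy_eq0 x y Hxy), ?(xi_xyyy_eq0 x y Hxy); field; exact Hs.
Qed.

Definition qderiv (q : quantity) (k : nat) : R -> R -> R :=
  expr_val jet_val (Nat.iter k (expr_dx jet_dx) (base q)).

Arguments qderiv q k x y : simpl never.

Lemma is_derive_qderiv_x q k x y : U x y ->
  is_derive (fun t => qderiv q k t y) x (qderiv q (S k) x y).
Proof. apply (is_derive_expr_val_x s_neq is_derive_jet_x). Qed.

Lemma is_derive_qderiv_y q k x y : U x y -> is_derive (fun t => qderiv q k x t) y 0.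
Proof.
  intros Hxy. rewrite <- (vanishes_dy_iter_dx jet_dx_dy U_open s_neq
                            is_derive_jet_x _ k (base_dy_vanishes q) x y Hxy).
  exact (is_derive_expr_val_y s_neq is_derive_jet_y _ x y Hxy).
Qed.

Lemma qderiv_dx_vanishes q k : (forall x y, U x y -> qderiv q k x y = 0) ->
  forall x y, U x y -> qderiv q (S k) x y = 0.
Proof. intros Hq. apply (partial_x_of_vanishing U U_open _ _ Hq), is_derive_qderiv_x. Qed.

Record cterm := CT { ct_poly : list R; ct_q : quantity; ct_k : nat }.

Definition xpoly (l : list R) (x : R) : R := fold_right (fun c acc => c + x * acc) 0 l.

Definition cexpr_val (e : list cterm) (x y : R) : R :=
  fold_right (fun t acc => xpoly (ct_poly t) x * qderiv (ct_q t) (ct_k t) x y + acc) 0 e.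

Lemma is_derive_cexpr_val_y e x y : U x y -> is_derive (fun t => cexpr_val e x t) y 0.
Proof.
  intros Hxy. induction e as [|[l q k] e IH]; simpl.
  - auto_derive; auto.
  - refine (is_derive_eq_value _ _ _ _ (is_derive_plus _ _ _ _ _
      (is_derive_scal _ _ (xpoly l x) _ (is_derive_qderiv_y q k x y Hxy)) IH) _).
    unfold plus; simpl. ring.
Qed.

Definition s_poly (l : list (list cterm)) (x y : R) : R :=
  sum_f_R0 (fun j => cexpr_val (nth j l []) x y * (x + y) ^ j) (pred (length l)).

Lemma s_poly_coefs_vanish l : (forall x y, U x y -> s_poly l x y = 0) ->
  forall j x y, U x y -> cexpr_val (nth j l []) x y = 0.
Proof.
  intros Hl j x y Hxy. destruct (Compare_dec.le_lt_dec j (pred (length l))) as [Hj|Hj].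
  - apply (s_polynomial_coefficients_vanish U U_open (fun j => cexpr_val (nth j l []))
             (pred (length l))); auto.
    intros; apply is_derive_cexpr_val_y; assumption.
  - rewrite nth_overflow by lia. reflexivity.
Qed.

Definition p1_coefs : list (list cterm) :=
  [ [CT [6; 2] qb 0];
    [];
    [CT [-2] qa 0; CT [-6; -2] qa 1; CT [0; -36; -6] qc 0; CT [6; 2] qalpha 0];
    [CT [-1] qa 2; CT [114; 32; 16/3] qc 0; CT [4] qalpha 1];
    [CT [32] qc 0; CT [45; 15] qc 1];
    [CT [3] qc 2] ].

Definition p0_coefs : list (list cterm) :=
  [ [CT [0; 6; 1] qb 0];
    [CT [6; 2] qb 0];
    [CT [-6; -2] qa 0; CT [0; -12; -2] qa 1; CT [0; 18; 3] qalpha 0; CT [3] qb 0;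
     CT [-6; -2] qb 1];
    [CT [-2] qa 0; CT [16; -2] qa 1; CT [0; 156; 90; 32/3] qc 0; CT [-16; 2] qalpha 0;
     CT [1] qb 2];
    [CT [6] qa 1; CT [-1] qa 2; CT [-156; -58; 16/3] qc 0; CT [0; 3; 1/2] qc 1;
     CT [-3] qalpha 0; CT [-2; -2] qalpha 1];
    [CT [-32; -64/3] qc 0; CT [-3; -17; -16/3] qc 1; CT [1] qalpha 2];
    [CT [41/6] qc 1; CT [8; 5/3] qc 2];
    [CT [1/2] qc 3] ].

Lemma p1_expansion x y : U x y -> cubic_coef (prolonged_F x y) 1 = s_poly p1_coefs x y.
Proof.
  intros Hxy. pose proof (s_neq x y Hxy) as Hs.
  unfold_prolonged_F.
  unfold s_poly, cexpr_val, qderiv. simpl. rewrite (xi_y_eq x y Hxy). field. exact Hs.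
Qed.

Lemma p0_expansion x y : U x y ->
  (x + y) * cubic_coef (prolonged_F x y) 0 = s_poly p0_coefs x y.
Proof.
  intros Hxy. pose proof (s_neq x y Hxy) as Hs.
  unfold_prolonged_F.
  unfold s_poly, cexpr_val, qderiv. simpl. field. exact Hs.
Qed.

Lemma p1_coefs_vanish j x y : U x y -> cexpr_val (nth j p1_coefs []) x y = 0.
Proof.
  revert j x y. apply s_poly_coefs_vanish. intros x y Hxy.
  rewrite <- p1_expansion by exact Hxy. apply p_coef_vanishes, Hxy.
Qed.

Lemma p0_coefs_vanish j x y : U x y -> cexpr_val (nth j p0_coefs []) x y = 0.
Proof.
  revert j x y. apply s_poly_coefs_vanish. intros x y Hxy.
  rewrite <- p0_expansion by exact Hxy. rewrite p_coef_vanishes by exact Hxy. ring.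
Qed.

Lemma c_vanishes x y : U x y -> qderiv qc 0 x y = 0 /\ qderiv qc 1 x y = 0.
Proof.
  intros Hxy.
  pose proof (p1_coefs_vanish 5 x y Hxy) as E5. pose proof (p0_coefs_vanish 6 x y Hxy) as E6.
  pose proof (p1_coefs_vanish 4 x y Hxy) as E4. simpl in E4, E5, E6.
  assert (c2 : qderiv qc 2 x y = 0) by lra.
  rewrite c2 in E6. assert (c1 : qderiv qc 1 x y = 0) by lra.
  rewrite c1 in E4. split; [lra | exact c1].
Qed.

Lemma b_vanishes x y : U x y -> qderiv qb 0 x y = 0.
Proof.
  intros Hxy.
  pose proof (p1_coefs_vanish 0 x y Hxy) as E1. pose proof (p0_coefs_vanish 0 x y Hxy) as E0.
  simpl in E1, E0. ring_simplify in E1. ring_simplify in E0.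
  destruct (Req_dec x (-3)) as [->|Hx]; [lra|].
  apply (Rmult_eq_reg_l (6 + 2 * x)); [lra | intro; apply Hx; lra].
Qed.

Lemma a_vanishes x y : U x y -> qderiv qa 0 x y = 0 /\ qderiv qa 1 x y = qderiv qalpha 0 x y.
Proof.
  intros Hxy.
  assert (b2 : qderiv qb 2 x y = 0).
  { revert x y Hxy. do 2 apply qderiv_dx_vanishes. exact b_vanishes. }
  destruct (c_vanishes x y Hxy) as [c0 _].
  pose proof (p1_coefs_vanish 2 x y Hxy) as E1. pose proof (p0_coefs_vanish 3 x y Hxy) as E0.
  simpl in E1, E0. rewrite c0 in E1, E0. rewrite b2 in E0.
  ring_simplify in E1. ring_simplify in E0.
  assert (d : qderiv qa 1 x y = qderiv qalpha 0 x y) by lra.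
  split; [rewrite d in E1; lra | exact d].
Qed.

Lemma alpha_vanishes x y : U x y -> qderiv qalpha 0 x y = 0.
Proof.
  intros Hxy. rewrite <- (proj2 (a_vanishes x y Hxy)).
  apply (qderiv_dx_vanishes qa 0); [intros x' y' H; apply (a_vanishes x' y' H) | exact Hxy].
Qed.

Lemma xi_eta_representation x y : x + y <> 0 ->
  Dxi 0 0 x y = qderiv qa 0 x y + (x + y) ^ 2 * qderiv qc 0 x y /\
  Deta 0 0 x y = - qderiv qa 0 x y + (x + y) * qderiv qalpha 0 x y + qderiv qb 0 x y / (x + y)
                 + (21 + 8 * x) / 3 * (x + y) ^ 2 * qderiv qc 0 x y
                 + (x + y) ^ 3 / 2 * qderiv qc 1 x y.
Proof. intros Hs. unfold qderiv. simpl. split; field. exact Hs. Qed.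

Lemma symmetry_vanishes x y : U x y -> xi x y = 0 /\ eta x y = 0.
Proof.
  intros Hxy. rewrite <- (proj1 xi_smooth x y Hxy), <- (proj1 eta_smooth x y Hxy).
  destruct (xi_eta_representation x y (s_neq x y Hxy)) as [-> ->].
  destruct (c_vanishes x y Hxy) as [-> ->].
  rewrite (proj1 (a_vanishes x y Hxy)), (alpha_vanishes x y Hxy), (b_vanishes x y Hxy).
  split; field. exact (s_neq x y Hxy).
Qed.

End Symmetry.

Theorem mainTheorem5 :
  forall (U : R -> R -> Prop) (xi eta : R -> R -> R),
    open2 U ->
    (forall x y, U x y -> x + y <> 0) ->
    lie_point_symmetry U xi eta ->
    forall x y, U x y -> xi x y = 0 /\ eta x y = 0.
Proof.
  intros U xi eta U_open s_neq [Dxi [Deta [xi_smooth [eta_smooth invariance]]]].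
  exact (symmetry_vanishes U xi eta Dxi Deta U_open s_neq xi_smooth eta_smooth invariance).
Qed.
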